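(* Let $a,b,c$ be pairwise distinct positive real numbers, and let $G_1$ and $G_2$ be the metric graphs described in the context, each equipped with the Laplacian $\Delta$ under Dirichlet standard boundary conditions. Then: (i) $G_1$ and $G_2$ are isospectral, i.e. $-\Delta$ has the same eigenvalues, counted with multiplicity, on $G_1$ and on $G_2$; (ii) $G_1$ and $G_2$ are not isometric; (iii) $T(G_1)\neq T(G_2)$, where $T$ denotes torsional rigidity.
   Context: A compact metric graph is a finite connected graph without loops in which each edge $e$ is identified with an interval $[0,l_e]$, $l_e>0$, with coordinate $x_e$. A function $\phi$ on the graph is a collection $\phi=\oplus_e \phi_e$ of functions on the edges. The Laplacian $\Delta$ acts as $(\Delta\phi)_e=\phi_e''$ on each edge. Dirichlet standard boundary conditions (DSBC) require that $\phi_e,\phi_e'$ be absolutely continuous with $\phi_e''\in L^2$ on every edge, together with the following vertex conditions: - $\phi$ is continuous at every vertex of degree $\geq 2$; - $\phi(v)=0$ at every vertex $v$ of degree $1$; - at every vertex $v$ of degree $\ne 1$, the sum over the edges incident to $v$ of the derivatives of $\phi$ taken in the direction pointing into $v$ is $0$ (Kirchhoff condition). With DSBC, $\Delta$ is self-adjoint with discrete spectrum. The torsional rigidity of such a graph $G$ is $T(G)=\int_G u(x)\,dx$, where $u$ is the unique function satisfying DSBC with $u_e''=-1$ on every edge. The graph $G_1$ has 16 vertices: - a central vertex $o$; - three vertices $m_1,m_2,m_3$; - three vertices $w_1,w_2,w_3$; - nine vertices of degree one. The edges of $G_1$ are: - $o m_1$ of length $2c$, $o m_2$ of length $2a$, $o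 m_3$ of length $2b$; - $m_1 w_1$ of length $2b$, $m_2 w_2$ of length $2c$, $m_3 w_3$ of length $2a$; - a pendant edge (ending at a degree-one vertex) at $m_1$ of length $a$, at $m_2$ of length $b$, and at $m_3$ of length $c$; - two pendant edges at $w_1$ of lengths $a$ and $c$, two at $w_2$ of lengths $a$ and $b$, and two at $w_3$ of lengths $b$ and $c$. The graph $G_2$ is obtained from $G_1$ by interchanging the roles of $b$ and $c$. Explicitly, its edges are: - $o m_1$ of length $2b$, $o m_2$ of length $2a$, $o m_3$ of length $2c$; - $m_1w_1$ of length $2c$, $m_2w_2$ of length $2b$, $m_3w_3$ of length $2a$; - a pendant edge at $m_1$ of length $a$, at $m_2$ of length $c$, and at $m_3$ of length $b$; - two pendant edges at $w_1$ of lengths $a,b$, at $w_2$ of lengths $a,c$, and at $w_3$ of lengths $c,b$. (These are the quantum graph analogs, with degree-two vertices removed, of the $7_1$ pair of isospectral planar domains of Buser–Conway–Doyle–Semmler.) *)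

From Stdlib Require Import Reals List Arith.
Import ListNotations.
Open Scope R_scope.

(* A metric graph: vertices 0..nV-1, edges listed as (source, target, length).
   Edge e is identified with [0, len e]; coordinate 0 sits at src e and
   coordinate len e at tgt e. *)
Record mgraph := MGraph { nV : nat; edges : list (nat * nat * R) }.

Definition nE (G : mgraph) : nat := length (edges G).
Definition src (G : mgraph) (e : nat) : nat := fst (fst (nth e (edges G) (0%nat, 0%nat, 0))).
Definition tgt (G : mgraph) (e : nat) : nat := snd (fst (nth e (edges G) (0%nat, 0%nat, 0))).
Definition len (G : mgraph) (e : nat) : R := snd (nth e (edges G) (0%nat, 0%nat, 0)).

Fixpoint rsum (n : nat) (f : nat -> R) : R :=
  match n with O => 0 | S k => rsum k f + f k end.
Fixpoint nsum (n : nat) (f : nat -> nat) : nat :=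
  match n with O => O | S k => (nsum k f + f k)%nat end.

Definition incident (G : mgraph) (e v : nat) : Prop := src G e = v \/ tgt G e = v.

Definition deg (G : mgraph) (v : nat) : nat :=
  nsum (nE G) (fun e => ((if Nat.eqb (src G e) v then 1 else 0)
                        + (if Nat.eqb (tgt G e) v then 1 else 0))%nat).

(* value at vertex v of the edge function phi e (e incident to v, no loops) *)
Definition endval (G : mgraph) (phi : nat -> R -> R) (e v : nat) : R :=
  if Nat.eqb (src G e) v then phi e 0 else phi e (len G e).

(* derivative of phi e at v taken in the direction pointing into v *)
Definition inward_der (G : mgraph) (dphi : nat -> R -> R) (e v : nat) : R :=
  (if Nat.eqb (src G e) v then - dphi e 0 else 0)
  + (if Nat.eqb (tgt G e) v then dphi e (len G e) else 0).

Definition DSBC_vertex (G : mgraph) (phi dphi : nat -> R -> R) : Prop :=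
  (forall v, (v < nV G)%nat -> (2 <= deg G v)%nat ->
     forall e1 e2, (e1 < nE G)%nat -> (e2 < nE G)%nat ->
       incident G e1 v -> incident G e2 v -> endval G phi e1 v = endval G phi e2 v)
  /\ (forall v, (v < nV G)%nat -> deg G v = 1%nat ->
       forall e, (e < nE G)%nat -> incident G e v -> endval G phi e v = 0)
  /\ (forall v, (v < nV G)%nat -> deg G v <> 1%nat ->
       rsum (nE G) (fun e => inward_der G dphi e v) = 0).

(* Regularity: each phi e is (the restriction to [0, len e] of) a twice
   differentiable function, with derivatives dphi e, ddphi e. *)
Definition twice_diff (phi dphi ddphi : nat -> R -> R) : Prop :=
  (forall e x, derivable_pt_lim (phi e) x (dphi e x)) /\
  (forall e x, derivable_pt_lim (dphi e) x (ddphi e x)).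

(* phi is an eigenfunction of -Delta with DSBC for eigenvalue lam
   (nonvanishing is imposed through linear independence below). *)
Definition eig_solution (G : mgraph) (lam : R) (phi dphi ddphi : nat -> R -> R) : Prop :=
  twice_diff phi dphi ddphi /\
  (forall e x, (e < nE G)%nat -> 0 <= x <= len G e -> - ddphi e x = lam * phi e x) /\
  DSBC_vertex G phi dphi.

Definition mult_ge (G : mgraph) (lam : R) (n : nat) : Prop :=
  exists Phi dPhi ddPhi : nat -> nat -> R -> R,
    (forall i, (i < n)%nat -> eig_solution G lam (Phi i) (dPhi i) (ddPhi i)) /\
    (forall c : nat -> R,
       (forall e x, (e < nE G)%nat -> 0 <= x <= len G e ->
          rsum n (fun i => c i * Phi i e x) = 0) ->
       forall i, (i < n)%nat -> c i = 0).

Definition isospectral (G1 G2 : mgraph) : Prop :=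
  forall (lam : R) (n : nat), mult_ge G1 lam n <-> mult_ge G2 lam n.

Definition isometric (G1 G2 : mgraph) : Prop :=
  nV G1 = nV G2 /\ nE G1 = nE G2 /\
  exists (fV fE : nat -> nat),
    (forall v, (v < nV G1)%nat -> (fV v < nV G2)%nat) /\
    (forall v w, (v < nV G1)%nat -> (w < nV G1)%nat -> fV v = fV w -> v = w) /\
    (forall e, (e < nE G1)%nat -> (fE e < nE G2)%nat) /\
    (forall e f, (e < nE G1)%nat -> (f < nE G1)%nat -> fE e = fE f -> e = f) /\
    (forall e, (e < nE G1)%nat ->
       len G2 (fE e) = len G1 e /\
       ((src G2 (fE e) = fV (src G1 e) /\ tgt G2 (fE e) = fV (tgt G1 e)) \/
        (src G2 (fE e) = fV (tgt G1 e) /\ tgt G2 (fE e) = fV (src G1 e)))).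

Definition torsion_solution (G : mgraph) (u du ddu : nat -> R -> R) : Prop :=
  twice_diff u du ddu /\
  (forall e x, (e < nE G)%nat -> 0 <= x <= len G e -> ddu e x = -1) /\
  DSBC_vertex G u du.

Definition torsional_rigidity_is (G : mgraph) (T : R) : Prop :=
  exists (u du ddu : nat -> R -> R) (I : nat -> R),
    torsion_solution G u du ddu /\
    (forall e, (e < nE G)%nat ->
       exists pr : Riemann_integrable (u e) 0 (len G e), RiemannInt pr = I e) /\
    T = rsum (nE G) I.

(* vertices: o = 0; m1,m2,m3 = 1,2,3; w1,w2,w3 = 4,5,6; degree-one 7..15 *)
Definition G1 (a b c : R) : mgraph := MGraph 16
  [ (0%nat,1%nat,2*c); (0%nat,2%nat,2*a); (0%nat,3%nat,2*b);
    (1%nat,4%nat,2*b); (2%nat,5%nat,2*c); (3%nat,6%nat,2*a);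
    (1%nat,7%nat,a); (2%nat,8%nat,b); (3%nat,9%nat,c);
    (4%nat,10%nat,a); (4%nat,11%nat,c); (5%nat,12%nat,a); (5%nat,13%nat,b); (6%nat,14%nat,b); (6%nat,15%nat,c) ].

Definition G2 (a b c : R) : mgraph := MGraph 16
  [ (0%nat,1%nat,2*b); (0%nat,2%nat,2*a); (0%nat,3%nat,2*c);
    (1%nat,4%nat,2*c); (2%nat,5%nat,2*b); (3%nat,6%nat,2*a);
    (1%nat,7%nat,a); (2%nat,8%nat,c); (3%nat,9%nat,b);
    (4%nat,10%nat,a); (4%nat,11%nat,b); (5%nat,12%nat,a); (5%nat,13%nat,c); (6%nat,14%nat,c); (6%nat,15%nat,b) ].

From Stdlib Require Import Reals Arith Lra Lia.
From Coquelicot Require Import Coquelicot.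
Open Scope R_scope.

(* G2 a b c is G1 a c b.  Each interior vertex of G1 carries one arm of each length a, b, c
   (a pendant edge or half of an edge of twice that length), so a function on G1 is a family of
   seven arms of each length.  Transplantation replaces the arms of each length by a fixed
   invertible signed combination of the arms of the exchanged length; it maps eigenfunctions of
   G1 to eigenfunctions of G2 with the same eigenvalue and preserves linear independence, and
   applied to G1 a c b it gives the converse, whence isospectrality.

   An isometry has to fix the central vertex, the only vertex whose three edges are long.  The
   edge o m1 of G1 of length 2c then goes to o m3 in G2, and no edge of length a is left at m3
   for the pendant edge of m1.

   The torsion function is quadratic on each edge and determined by its values at the seven
   interior vertices.  These solve a Kirchhoff system whose quadratic form is the Dirichlet
   energy, so they are unique; solving it gives
   T(G1) - T(G2) = -(a - b)(b - c)(a - c) Q / P with P, Q polynomials with positive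
   coefficients. *)

Lemma rsum_ext n (f g : nat -> R) :
  (forall i, (i < n)%nat -> f i = g i) -> rsum n f = rsum n g.
Proof.
  induction n as [|n IH]; intros H; cbn; [reflexivity|].
  rewrite IH by (intros; apply H; lia). rewrite H by lia. reflexivity.
Qed.

Lemma rsum_plus n (f g : nat -> R) : rsum n (fun i => f i + g i) = rsum n f + rsum n g.
Proof. induction n as [|n IH]; cbn; [ring | rewrite IH; ring]. Qed.

Lemma rsum_scal n k (f : nat -> R) : rsum n (fun i => k * f i) = k * rsum n f.
Proof. induction n as [|n IH]; cbn; [ring | rewrite IH; ring]. Qed.

Lemma rsum_opp n (f : nat -> R) : rsum n (fun i => - f i) = - rsum n f.
Proof. induction n as [|n IH]; cbn; [ring | rewrite IH; ring]. Qed.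

Lemma rsum_exchange n m (g : nat -> nat -> R) :
  rsum n (fun i => rsum m (g i)) = rsum m (fun j => rsum n (fun i => g i j)).
Proof.
  induction n as [|n IH]; cbn.
  - induction m as [|m IHm]; cbn; [reflexivity | rewrite <- IHm; ring].
  - rewrite IH, <- rsum_plus. reflexivity.
Qed.

Lemma rsum_nonneg n (f : nat -> R) : (forall i, (i < n)%nat -> 0 <= f i) -> 0 <= rsum n f.
Proof.
  induction n as [|n IH]; intros H; cbn; [lra|].
  pose proof (IH (fun i Hi => H i ltac:(lia))). pose proof (H n ltac:(lia)). lra.
Qed.

Lemma rsum_nonneg_eq0 n (f : nat -> R) : (forall i, (i < n)%nat -> 0 <= f i) ->
  rsum n f = 0 -> forall i, (i < n)%nat -> f i = 0.
Proof.
  induction n as [|n IH]; intros H H0 i Hi; [lia|]. cbn in H0.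
  pose proof (rsum_nonneg n f (fun j Hj => H j ltac:(lia))). pose proof (H n ltac:(lia)).
  destruct (Nat.eq_dec i n) as [->|Hne]; [lra|].
  apply IH; [intros; apply H; lia | lra | lia].
Qed.

Lemma derivable_pt_lim_local (f g : R -> R) x l d : 0 < d ->
  (forall y, Rabs (y - x) < d -> g y = f y) ->
  derivable_pt_lim f x l -> derivable_pt_lim g x l.
Proof.
  intros Hd Hloc Hf eps Heps.
  destruct (Hf eps Heps) as [del Hdel].
  assert (Hm : 0 < Rmin del d) by (apply Rmin_pos; [apply (cond_pos del)|lra]).
  exists (mkposreal _ Hm). intros h Hh0 Hh. simpl in Hh.
  rewrite (Hloc (x + h)), (Hloc x).
  - apply Hdel; auto. apply Rlt_le_trans with (1 := Hh). apply Rmin_l.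
  - rewrite Rminus_diag, Rabs_R0; lra.
  - replace (x + h - x) with h by ring. apply Rlt_le_trans with (1 := Hh). apply Rmin_r.
Qed.

Definition glue (f h : R -> R) (m x : R) : R := if Rle_dec x m then f x else h x.

Lemma glue_le f h m x : x <= m -> glue f h m x = f x.
Proof. intros; unfold glue; destruct (Rle_dec x m); [reflexivity | lra]. Qed.

Lemma glue_gt f h m x : m < x -> glue f h m x = h x.
Proof. intros; unfold glue; destruct (Rle_dec x m); [lra | reflexivity]. Qed.

Lemma derivable_pt_lim_glue (f h f' h' : R -> R) m :
  (forall x, derivable_pt_lim f x (f' x)) -> (forall x, derivable_pt_lim h x (h' x)) ->
  f m = h m -> f' m = h' m ->
  forall x, derivable_pt_lim (glue f h m) x (glue f' h' m x).
Proof.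
  intros Hf Hh E E' x.
  destruct (Rtotal_order x m) as [Hlt|[<-|Hgt]].
  - rewrite glue_le by lra. apply (derivable_pt_lim_local f _ x _ (m - x)); [lra| |auto].
    intros y Hy. apply glue_le. apply Rabs_def2 in Hy. lra.
  - rewrite glue_le by lra. intros eps Heps.
    destruct (Hf x eps Heps) as [d1 H1]. destruct (Hh x eps Heps) as [d2 H2].
    assert (Hm : 0 < Rmin d1 d2) by (apply Rmin_pos; [apply (cond_pos d1)|apply (cond_pos d2)]).
    exists (mkposreal _ Hm). intros k Hk0 Hk. simpl in Hk.
    rewrite (glue_le f h x x) by lra.
    destruct (Rle_dec k 0).
    + rewrite glue_le by lra. apply H1; auto. apply Rlt_le_trans with (1 := Hk). apply Rmin_l.
    + rewrite glue_gt by lra. rewrite E, E'. apply H2; auto.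
      apply Rlt_le_trans with (1 := Hk). apply Rmin_r.
  - rewrite glue_gt by lra. apply (derivable_pt_lim_local h _ x _ (x - m)); [lra| |auto].
    intros y Hy. apply glue_gt. apply Rabs_def2 in Hy. lra.
Qed.

Lemma derivable_pt_lim_reflect (g g' : R -> R) L k s :
  (forall y, derivable_pt_lim g y (g' y)) ->
  derivable_pt_lim (fun s => k * g (L - s)) s (- k * g' (L - s)).
Proof.
  intros Hg. apply is_derive_Reals.
  replace (- k * g' (L - s)) with (scal k (scal (-1) (g' (L - s))))
    by (unfold scal; simpl; unfold mult; simpl; ring).
  apply is_derive_scal, (is_derive_comp g (fun s => L - s)).
  - apply is_derive_Reals, Hg.
  - auto_derive; auto; ring.
Qed.

Lemma derivable_pt_lim_rsum n (k : nat -> R) (g g' : nat -> R -> R) s :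
  (forall i, derivable_pt_lim (g i) s (g' i s)) ->
  derivable_pt_lim (fun s => rsum n (fun i => k i * g i s)) s (rsum n (fun i => k i * g' i s)).
Proof.
  intros Hg. induction n as [|n IH]; cbn.
  - apply derivable_pt_lim_const.
  - apply (derivable_pt_lim_plus (fun s => rsum n (fun i => k i * g i s)) (fun s => k n * g n s)); auto.
    apply (derivable_pt_lim_scal (g n)), Hg.
Qed.

Lemma constant_of_derivative_zero (g g' : R -> R) l :
  (forall x, derivable_pt_lim g x (g' x)) -> (forall x, 0 < x < l -> g' x = 0) ->
  forall x, 0 <= x <= l -> g x = g 0.
Proof.
  intros Hd H0 x Hx.
  set (pr := fun y (_ : 0 < y < l) => exist (fun v => derivable_pt_abs g y v) (g' y) (Hd y)).
  apply (null_derivative_loc g 0 l pr); [|intros; apply H0; auto | lra].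
  intros y _. apply derivable_continuous_pt. exists (g' y). apply Hd.
Qed.

Lemma torsion_on_interval (f f' f'' : R -> R) l :
  (forall x, derivable_pt_lim f x (f' x)) -> (forall x, derivable_pt_lim f' x (f'' x)) ->
  (forall x, 0 <= x <= l -> f'' x = -1) ->
  forall x, 0 <= x <= l -> f' x = f' 0 - x /\ f x = f 0 + f' 0 * x - x * x / 2.
Proof.
  intros D1 D2 H x Hx.
  assert (G : forall y, 0 <= y <= l -> f' y + y = f' 0 + 0).
  { apply (constant_of_derivative_zero (fun y => f' y + y) (fun y => f'' y + 1)).
    - intros z. apply is_derive_Reals. apply (is_derive_plus f' (fun y => y)).
      + apply is_derive_Reals, D2.
      + apply (is_derive_id z).
    - intros z Hz. rewrite H by lra. ring. }
  assert (K : forall y, 0 <= y <= l ->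
      f y - f' 0 * y + y * y / 2 = f 0 - f' 0 * 0 + 0 * 0 / 2).
  { apply (constant_of_derivative_zero (fun y => f y - f' 0 * y + y * y / 2)
                                      (fun y => f' y - f' 0 + y)).
    - intros z. apply is_derive_Reals. auto_derive.
      + apply ex_derive_Reals_1. exists (f' z). apply D1.
      + match goal with |- context [Derive ?g z] =>
          rewrite (is_derive_unique g z (f' z)) by apply is_derive_Reals, D1 end.
        field.
    - intros z Hz. specialize (G z ltac:(lra)). lra. }
  specialize (G x Hx). specialize (K x Hx). split; lra.
Qed.

Lemma is_RInt_quadratic l al be :
  is_RInt (fun x => be + al * x - x * x / 2) 0 l (be * l + al * l * l / 2 - l * l * l / 6).
Proof.
  set (F := fun x => be * x + al * x * x / 2 - x * x * x / 6).
  replace (be * l + al * l * l / 2 - l * l * l / 6) with (minus (F l) (F 0))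
    by (unfold minus, plus, opp, F; simpl; field).
  apply (is_RInt_derive F).
  - intros x _. unfold F. auto_derive; auto. field.
  - intros x _. apply (ex_derive_continuous (fun x => be + al * x - x * x / 2)). auto_derive; auto.
Qed.

Lemma RiemannInt_quadratic l al be (f : R -> R) (pr : Riemann_integrable f 0 l) : 0 <= l ->
  (forall x, 0 <= x <= l -> f x = be + al * x - x * x / 2) ->
  RiemannInt pr = be * l + al * l * l / 2 - l * l * l / 6.
Proof.
  intros Hl H. rewrite <- RInt_Reals.
  rewrite (RInt_ext f (fun x => be + al * x - x * x / 2)).
  - apply is_RInt_unique, is_RInt_quadratic.
  - intros x Hx. rewrite Rmin_left, Rmax_right in Hx by lra. apply H; lra.
Qed.

Lemma quadratic_Riemann_integrable l al be :
  Riemann_integrable (fun x => be + al * x - x * x / 2) 0 l.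
Proof. apply ex_RInt_Reals_0. eexists. apply is_RInt_quadratic. Qed.

Lemma G2_swap a b c : G2 a b c = G1 a c b.
Proof. reflexivity. Qed.

Definition G1_pendant_zero (a b c : R) (f : nat -> R -> R) : Prop :=
  f 6%nat a = 0 /\ f 7%nat b = 0 /\ f 8%nat c = 0 /\ f 9%nat a = 0 /\ f 10%nat c = 0 /\
  f 11%nat a = 0 /\ f 12%nat b = 0 /\ f 13%nat b = 0 /\ f 14%nat c = 0.

Definition G1_conditions (a b c : R) (p dp : nat -> R -> R) : Prop :=
  (p 0%nat 0 = p 1%nat 0 /\ p 1%nat 0 = p 2%nat 0 /\
   p 0%nat (2*c) = p 3%nat 0 /\ p 3%nat 0 = p 6%nat 0 /\
   p 1%nat (2*a) = p 4%nat 0 /\ p 4%nat 0 = p 7%nat 0 /\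
   p 2%nat (2*b) = p 5%nat 0 /\ p 5%nat 0 = p 8%nat 0 /\
   p 3%nat (2*b) = p 9%nat 0 /\ p 9%nat 0 = p 10%nat 0 /\
   p 4%nat (2*c) = p 11%nat 0 /\ p 11%nat 0 = p 12%nat 0 /\
   p 5%nat (2*a) = p 13%nat 0 /\ p 13%nat 0 = p 14%nat 0) /\
  G1_pendant_zero a b c p /\
  (dp 0%nat 0 + dp 1%nat 0 + dp 2%nat 0 = 0 /\
   dp 0%nat (2*c) = dp 3%nat 0 + dp 6%nat 0 /\
   dp 1%nat (2*a) = dp 4%nat 0 + dp 7%nat 0 /\
   dp 2%nat (2*b) = dp 5%nat 0 + dp 8%nat 0 /\
   dp 3%nat (2*b) = dp 9%nat 0 + dp 10%nat 0 /\
   dp 4%nat (2*c) = dp 11%nat 0 + dp 12%nat 0 /\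
   dp 5%nat (2*a) = dp 13%nat 0 + dp 14%nat 0).

Ltac G1_side_condition := unfold incident; cbn; lia.

Ltac use_continuity H v e1 e2 :=
  let K := fresh in
  pose proof (H v ltac:(G1_side_condition) ltac:(G1_side_condition) e1 e2
                ltac:(G1_side_condition) ltac:(G1_side_condition)
                ltac:(G1_side_condition) ltac:(G1_side_condition)) as K;
  unfold endval in K; cbn in K.

Ltac use_dirichlet H v e :=
  let K := fresh in
  pose proof (H v ltac:(G1_side_condition) eq_refl e
                ltac:(G1_side_condition) ltac:(G1_side_condition)) as K;
  unfold endval in K; cbn in K.

Ltac use_kirchhoff H v :=
  let K := fresh in
  pose proof (H v ltac:(G1_side_condition) ltac:(G1_side_condition)) as K;
  unfold nE, inward_der in K; cbn in K.

Lemma G1_conditions_of_DSBC a b c p dp :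
  DSBC_vertex (G1 a b c) p dp -> G1_conditions a b c p dp.
Proof.
  intros [Hcont [Hdir Hkir]].
  use_continuity Hcont 0%nat 0%nat 1%nat. use_continuity Hcont 0%nat 1%nat 2%nat.
  use_continuity Hcont 1%nat 0%nat 3%nat. use_continuity Hcont 1%nat 3%nat 6%nat.
  use_continuity Hcont 2%nat 1%nat 4%nat. use_continuity Hcont 2%nat 4%nat 7%nat.
  use_continuity Hcont 3%nat 2%nat 5%nat. use_continuity Hcont 3%nat 5%nat 8%nat.
  use_continuity Hcont 4%nat 3%nat 9%nat. use_continuity Hcont 4%nat 9%nat 10%nat.
  use_continuity Hcont 5%nat 4%nat 11%nat. use_continuity Hcont 5%nat 11%nat 12%nat.
  use_continuity Hcont 6%nat 5%nat 13%nat. use_continuity Hcont 6%nat 13%nat 14%nat.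
  use_dirichlet Hdir 7%nat 6%nat. use_dirichlet Hdir 8%nat 7%nat.
  use_dirichlet Hdir 9%nat 8%nat. use_dirichlet Hdir 10%nat 9%nat.
  use_dirichlet Hdir 11%nat 10%nat. use_dirichlet Hdir 12%nat 11%nat.
  use_dirichlet Hdir 13%nat 12%nat. use_dirichlet Hdir 14%nat 13%nat.
  use_dirichlet Hdir 15%nat 14%nat.
  use_kirchhoff Hkir 0%nat. use_kirchhoff Hkir 1%nat. use_kirchhoff Hkir 2%nat.
  use_kirchhoff Hkir 3%nat. use_kirchhoff Hkir 4%nat. use_kirchhoff Hkir 5%nat.
  use_kirchhoff Hkir 6%nat.
  unfold G1_conditions, G1_pendant_zero; repeat split; lra.
Qed.

Definition G1_extend (U : nat -> R) (v : nat) : R := if Nat.ltb v 7 then U v else 0.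

Definition G1_vertex_value (p : nat -> R -> R) (v : nat) : R :=
  match v with
  | 0 => p 0%nat 0 | 1 => p 3%nat 0 | 2 => p 4%nat 0 | 3 => p 5%nat 0
  | 4 => p 9%nat 0 | 5 => p 11%nat 0 | 6 => p 13%nat 0 | _ => 0
  end.

Lemma G1_endpoint_values a b c p dp e : G1_conditions a b c p dp -> (e < 15)%nat ->
  p e 0 = G1_extend (G1_vertex_value p) (src (G1 a b c) e) /\
  p e (len (G1 a b c) e) = G1_extend (G1_vertex_value p) (tgt (G1 a b c) e).
Proof.
  unfold G1_conditions, G1_pendant_zero; intros H He. decompose [and] H; clear H.
  do 15 (destruct e as [|e]; [cbn; split; lra|]). lia.
Qed.

Lemma G1_endval a b c p dp e v : G1_conditions a b c p dp ->
  (e < 15)%nat -> incident (G1 a b c) e v ->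
  endval (G1 a b c) p e v = G1_extend (G1_vertex_value p) v.
Proof.
  intros H He Hi. destruct (G1_endpoint_values a b c p dp e H He) as [E0 El].
  unfold endval. destruct (Nat.eqb_spec (src (G1 a b c) e) v) as [<-|Hne]; [exact E0|].
  destruct Hi as [Hs|<-]; [contradiction | exact El].
Qed.

Lemma G1_DSBC_of_conditions a b c p dp :
  G1_conditions a b c p dp -> DSBC_vertex (G1 a b c) p dp.
Proof.
  intros H. split; [|split].
  - intros v _ _ e1 e2 He1 He2 I1 I2.
    rewrite (G1_endval a b c p dp e1 v), (G1_endval a b c p dp e2 v); auto.
  - intros v Hv Hdeg e He I. rewrite (G1_endval a b c p dp e v) by auto.
    cbn in Hv. do 7 (destruct v as [|v]; [cbn in Hdeg; lia|]). reflexivity.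
  - intros v Hv Hdeg. unfold G1_conditions in H. decompose [and] H; clear H.
    cbn in Hv. do 7 (destruct v as [|v]; [unfold nE, inward_der; cbn; lra|]).
    exfalso. do 9 (destruct v as [|v]; [cbn in Hdeg; lia|]). lia.
Qed.

Lemma G1_len_pos a b c e : 0 < a -> 0 < b -> 0 < c -> (e < 15)%nat -> 0 < len (G1 a b c) e.
Proof. intros; do 15 (destruct e as [|e]; [unfold len; cbn; lra|]). lia. Qed.

(** * Transplantation *)

Inductive side := SA | SB | SC.

Definition side_len (a b c : R) (x : side) : R := match x with SA => a | SB => b | SC => c end.

Definition swap_bc (x : side) : side := match x with SA => SA | SB => SC | SC => SB end.

Lemma side_len_swap_bc a b c x : side_len a c b (swap_bc x) = side_len a b c x.
Proof. destruct x; reflexivity. Qed.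

Lemma swap_bc_involutive x : swap_bc (swap_bc x) = x.
Proof. destruct x; reflexivity. Qed.

(* [arm a b c sg f x v] is [f] on the arm of length [side_len a b c x] at the interior vertex
   [v], parametrised from [v]; on the far half of a long edge it is reflected and multiplied by
   [sg] (1 for values, -1 for derivatives). *)
Definition arm (a b c sg : R) (f : nat -> R -> R) (x : side) (v : nat) (s : R) : R :=
  match x, v with
  | SA, 0 => f 1%nat s | SA, 1 => f 6%nat s | SA, 2 => sg * f 1%nat (2*a - s)
  | SA, 3 => f 5%nat s | SA, 4 => f 9%nat s | SA, 5 => f 11%nat s | SA, 6 => sg * f 5%nat (2*a - s)
  | SB, 0 => f 2%nat s | SB, 1 => f 3%nat s | SB, 2 => f 7%nat s | SB, 3 => sg * f 2%nat (2*b - s)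
  | SB, 4 => sg * f 3%nat (2*b - s) | SB, 5 => f 12%nat s | SB, 6 => f 13%nat s
  | SC, 0 => f 0%nat s | SC, 1 => sg * f 0%nat (2*c - s) | SC, 2 => f 4%nat s
  | SC, 3 => f 8%nat s | SC, 4 => f 10%nat s | SC, 5 => sg * f 4%nat (2*c - s) | SC, 6 => f 14%nat s
  | _, _ => 0
  end.

Definition G1_assemble (a b c sg : R) (r : side -> nat -> R -> R) (e : nat) : R -> R :=
  match e with
  | 0 => glue (r SC 0%nat) (fun t => sg * r SC 1%nat (2*c - t)) c
  | 1 => glue (r SA 0%nat) (fun t => sg * r SA 2%nat (2*a - t)) a
  | 2 => glue (r SB 0%nat) (fun t => sg * r SB 3%nat (2*b - t)) b
  | 3 => glue (r SB 1%nat) (fun t => sg * r SB 4%nat (2*b - t)) b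
  | 4 => glue (r SC 2%nat) (fun t => sg * r SC 5%nat (2*c - t)) c
  | 5 => glue (r SA 3%nat) (fun t => sg * r SA 6%nat (2*a - t)) a
  | 6 => r SA 1%nat | 7 => r SB 2%nat | 8 => r SC 3%nat
  | 9 => r SA 4%nat | 10 => r SC 4%nat | 11 => r SA 5%nat
  | 12 => r SB 5%nat | 13 => r SB 6%nat | 14 => r SC 6%nat
  | _ => fun _ => 0
  end.

Definition arm_midpoints (a b c sg : R) (r : side -> nat -> R -> R) : Prop :=
  r SC 0%nat c = sg * r SC 1%nat c /\ r SA 0%nat a = sg * r SA 2%nat a /\
  r SB 0%nat b = sg * r SB 3%nat b /\ r SB 1%nat b = sg * r SB 4%nat b /\
  r SC 2%nat c = sg * r SC 5%nat c /\ r SA 3%nat a = sg * r SA 6%nat a.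

Definition transplant_coef (q v : nat) : R :=
  match q, v with
  | 0, 1 | 0, 2 | 0, 3 => -1
  | 1, 0 | 1, 4 => -1 | 1, 2 => 1
  | 2, 0 | 2, 6 => -1 | 2, 1 => 1
  | 3, 0 | 3, 5 => -1 | 3, 3 => 1
  | 4, 1 => -1 | 4, 4 | 4, 5 => 1
  | 5, 3 => -1 | 5, 4 | 5, 6 => 1
  | 6, 2 => -1 | 6, 5 | 6, 6 => 1
  | _, _ => 0
  end.

Definition transplant_row (r : nat -> R) (q : nat) : R :=
  rsum 7 (fun v => transplant_coef q v * r v).

Lemma transplant_row_lincomb n (k : nat -> R) (r : nat -> nat -> R) q :
  rsum n (fun i => k i * transplant_row (r i) q) =
  transplant_row (fun v => rsum n (fun i => k i * r i v)) q.
Proof.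
  unfold transplant_row.
  rewrite (rsum_ext n _ (fun i => rsum 7 (fun v => k i * (transplant_coef q v * r i v))))
    by (intros; rewrite <- rsum_scal; reflexivity).
  rewrite rsum_exchange. apply rsum_ext. intros v _.
  rewrite <- rsum_scal. apply rsum_ext. intros; ring.
Qed.

Lemma transplant_row_injective (r : nat -> R) :
  (forall q, (q < 7)%nat -> transplant_row r q = 0) -> forall v, (v < 7)%nat -> r v = 0.
Proof.
  intros H.
  pose proof (H 0%nat ltac:(lia)). pose proof (H 1%nat ltac:(lia)).
  pose proof (H 2%nat ltac:(lia)). pose proof (H 3%nat ltac:(lia)).
  pose proof (H 4%nat ltac:(lia)). pose proof (H 5%nat ltac:(lia)).
  pose proof (H 6%nat ltac:(lia)).
  unfold transplant_row in *; cbn in *.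
  intros v Hv. do 7 (destruct v as [|v]; [lra|]). lia.
Qed.

(* Since G2 a b c = G1 a c b, the arms of side [x] of the transplant come from the arms of
   side [swap_bc x] of G1. *)
Definition transplanted_arms (a b c sg : R) (f : nat -> R -> R) (x : side) (q : nat) (s : R) : R :=
  transplant_row (fun v => arm a b c sg f (swap_bc x) v s) q.

Definition transplant (a b c sg : R) (f : nat -> R -> R) : nat -> R -> R :=
  G1_assemble a c b sg (transplanted_arms a b c sg f).

Section Derivatives.
Variables (a b c sg sg' : R) (f f' : nat -> R -> R).
Hypothesis sg'_opp : sg' = - sg.
Hypothesis f_deriv : forall e y, derivable_pt_lim (f e) y (f' e y).

Lemma derivable_arm x v s :
  derivable_pt_lim (arm a b c sg f x v) s (arm a b c sg' f' x v s).
Proof.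
  subst sg'.
  destruct x, v as [|[|[|[|[|[|[|v]]]]]]]; cbn;
    first [apply f_deriv | apply derivable_pt_lim_reflect, f_deriv | apply derivable_pt_lim_const].
Qed.

Lemma derivable_transplanted_arms x q s :
  derivable_pt_lim (transplanted_arms a b c sg f x q) s (transplanted_arms a b c sg' f' x q s).
Proof. apply derivable_pt_lim_rsum. intros v. apply derivable_arm. Qed.

End Derivatives.

Lemma derivable_G1_assemble a b c sg sg' (r r' : side -> nat -> R -> R) :
  sg' = - sg -> (forall x v s, derivable_pt_lim (r x v) s (r' x v s)) ->
  arm_midpoints a b c sg r -> arm_midpoints a b c sg' r' ->
  forall e t, derivable_pt_lim (G1_assemble a b c sg r e) t (G1_assemble a b c sg' r' e t).
Proof.
  intros -> Hr M N e t.
  destruct M as (M0 & M1 & M2 & M3 & M4 & M5), N as (N0 & N1 & N2 & N3 & N4 & N5).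
  do 6 (destruct e as [|e];
    [ apply derivable_pt_lim_glue;
      [ apply Hr | intros; apply derivable_pt_lim_reflect, Hr
      | match goal with |- context [2 * ?L - ?L] => replace (2 * L - L) with L by ring end;
        assumption .. ] |]).
  do 9 (destruct e as [|e]; [apply Hr|]).
  apply derivable_pt_lim_const.
Qed.

Ltac simplify_reflections :=
  repeat match goal with
  | |- context [2 * ?L - (2 * ?L - ?t)] => replace (2 * L - (2 * L - t)) with t by ring
  | |- context [2 * ?L - ?L] => replace (2 * L - L) with L by ring
  | |- context [?x - 0] => rewrite (Rminus_0_r x)
  | |- context [?x - ?x] => rewrite (Rminus_diag x)
  end.

Ltac evaluate_glue :=
  repeat first [rewrite glue_le by lra | rewrite glue_gt by lra].

Lemma transplanted_arms_midpoints a b c f :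
  G1_pendant_zero a b c f -> arm_midpoints a c b 1 (transplanted_arms a b c 1 f).
Proof.
  unfold G1_pendant_zero, arm_midpoints, transplanted_arms, transplant_row; cbn.
  simplify_reflections. lra.
Qed.

Lemma transplanted_arms_midpoints_odd a b c f :
  arm_midpoints a c b (-1) (transplanted_arms a b c (-1) f).
Proof.
  unfold arm_midpoints, transplanted_arms, transplant_row; cbn.
  simplify_reflections. lra.
Qed.

Section Eigenvalue_equation.
Variables (a b c lam : R).

Lemma arm_ode (p ddp : nat -> R -> R) :
  (forall e t, (e < 15)%nat -> 0 <= t <= len (G1 a b c) e -> - ddp e t = lam * p e t) ->
  forall x v s, 0 <= s <= side_len a b c x -> - arm a b c 1 ddp x v s = lam * arm a b c 1 p x v s.
Proof.
  intros H x v s Hs.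
  destruct x, v as [|[|[|[|[|[|[|v]]]]]]]; cbn in Hs |- *;
    try match goal with |- context [ddp ?e ?t] =>
          pose proof (H e t ltac:(lia) ltac:(unfold len; cbn; lra)) end;
    lra.
Qed.

Lemma transplant_row_ode (r r'' : nat -> R) q :
  (forall v, - r'' v = lam * r v) -> - transplant_row r'' q = lam * transplant_row r q.
Proof.
  intros H. unfold transplant_row.
  rewrite <- rsum_scal, <- rsum_opp. apply rsum_ext. intros v _.
  rewrite <- Rmult_assoc, (Rmult_comm lam), Rmult_assoc, <- H. ring.
Qed.

Lemma G1_assemble_ode (r r'' : side -> nat -> R -> R) :
  (forall x v s, 0 <= s <= side_len a b c x -> - r'' x v s = lam * r x v s) ->
  forall e t, (e < 15)%nat -> 0 <= t <= len (G1 a b c) e ->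
  - G1_assemble a b c 1 r'' e t = lam * G1_assemble a b c 1 r e t.
Proof.
  intros H e t He Ht.
  destruct (Rle_dec t (len (G1 a b c) e / 2));
  do 15 (destruct e as [|e];
    [ unfold len in *; cbn in *; evaluate_glue; rewrite ?Rmult_1_l;
      apply H; cbn; lra |]); lia.
Qed.

End Eigenvalue_equation.

Lemma G1_assemble_arm a b c f e t :
  (e < 15)%nat -> G1_assemble a b c 1 (arm a b c 1 f) e t = f e t.
Proof.
  intros He.
  do 15 (destruct e as [|e];
    [ cbn; unfold glue; try destruct (Rle_dec _ _); cbn; simplify_reflections; ring |]).
  lia.
Qed.

Lemma G1_assemble_point a b c e t :
  (e < 15)%nat -> 0 <= t <= len (G1 a b c) e ->
  exists x v s, (forall r, G1_assemble a b c 1 r e t = r x v s) /\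
    (v < 7)%nat /\ 0 <= s <= side_len a b c x.
Proof.
  intros He Ht.
  destruct (Rle_dec t (len (G1 a b c) e / 2)) as [Hhalf|Hhalf];
  do 15 (destruct e as [|e];
    [ unfold len in *; cbn in *;
      do 3 eexists; split;
      [ intros r; cbn; evaluate_glue; first [reflexivity | apply Rmult_1_l]
      | split; [lia | cbn; lra] ] |]); lia.
Qed.

Lemma arm_point a b c x v s :
  (v < 7)%nat -> 0 <= s <= side_len a b c x ->
  exists e t, (forall f, arm a b c 1 f x v s = f e t) /\
    (e < 15)%nat /\ 0 <= t <= len (G1 a b c) e.
Proof.
  intros Hv Hs.
  destruct x; do 7 (destruct v as [|v];
    [ cbn in Hs; do 2 eexists; split;
      [ intros f; cbn; first [reflexivity | apply Rmult_1_l]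
      | split; [lia | unfold len; cbn; lra] ] |]); lia.
Qed.

Lemma arm_G1_assemble a b c r x v s :
  arm_midpoints a b c 1 r -> (v < 7)%nat -> 0 <= s <= side_len a b c x ->
  arm a b c 1 (G1_assemble a b c 1 r) x v s = r x v s.
Proof.
  intros M Hv Hs. destruct M as (M0 & M1 & M2 & M3 & M4 & M5).
  destruct x; do 7 (destruct v as [|v];
    [ cbn in Hs |- *; unfold glue; try destruct (Rle_dec _ _) as [Hmid|Hmid];
      first [ ring | lra
            | match goal with Hmid : 2 * ?L - s <= ?L |- _ =>
                assert (s = L) by lra; subst s end;
              simplify_reflections; lra
            | simplify_reflections; ring ] |]); lia.
Qed.

Lemma transplant_conditions a b c p dp : 0 < a -> 0 < b -> 0 < c ->
  G1_conditions a b c p dp -> G1_conditions a c b (transplant a b c 1 p) (transplant a b c (-1) dp).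
Proof.
  intros Ha Hb Hc H. unfold G1_conditions, G1_pendant_zero in *. decompose [and] H; clear H.
  unfold transplant; cbn [G1_assemble]. evaluate_glue.
  unfold transplanted_arms, transplant_row; cbn. simplify_reflections.
  repeat split; lra.
Qed.

Lemma transplant_eig_solution a b c lam p dp ddp : 0 < a -> 0 < b -> 0 < c ->
  eig_solution (G1 a b c) lam p dp ddp ->
  eig_solution (G2 a b c) lam (transplant a b c 1 p) (transplant a b c (-1) dp)
    (transplant a b c 1 ddp).
Proof.
  intros Ha Hb Hc [[Dp Ddp] [Hode Hv]].
  apply G1_conditions_of_DSBC in Hv.
  assert (Mp := transplanted_arms_midpoints a b c p ltac:(apply Hv)).
  assert (Mdp := transplanted_arms_midpoints_odd a b c dp).
  assert (Mddp : arm_midpoints a c b 1 (transplanted_arms a b c 1 ddp)).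
  { apply transplanted_arms_midpoints.
    destruct Hv as (_ & Hz & _). unfold G1_pendant_zero in *.
    assert (E : forall e t, (e < 15)%nat -> t = len (G1 a b c) e -> p e t = 0 -> ddp e t = 0).
    { intros e t He -> Hp.
      assert (Ht : 0 <= len (G1 a b c) e <= len (G1 a b c) e).
      { split; [|lra]. do 15 (destruct e as [|e]; [unfold len; cbn; lra|]). lia. }
      specialize (Hode e _ He Ht). rewrite Hp in Hode. lra. }
    repeat split; apply E; (lia || reflexivity || tauto). }
  rewrite G2_swap. split; [split|split].
  - apply derivable_G1_assemble; [ring | | exact Mp | exact Mdp].
    intros; apply derivable_transplanted_arms; [ring | exact Dp].
  - apply derivable_G1_assemble; [ring | | exact Mdp | exact Mddp].
    intros; apply derivable_transplanted_arms; [ring | exact Ddp].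
  - intros e t He Ht. apply G1_assemble_ode; auto.
    intros x q s Hs. apply transplant_row_ode. intros v. apply (arm_ode a b c); auto.
    rewrite <- side_len_swap_bc, swap_bc_involutive. exact Hs.
  - apply G1_DSBC_of_conditions, transplant_conditions; auto.
Qed.

Lemma transplant_lincomb_zero a b c n k (Phi : nat -> nat -> R -> R) :
  (forall i, (i < n)%nat -> G1_pendant_zero a b c (Phi i)) ->
  (forall e t, (e < 15)%nat -> 0 <= t <= len (G2 a b c) e ->
     rsum n (fun i => k i * transplant a b c 1 (Phi i) e t) = 0) ->
  forall e t, (e < 15)%nat -> 0 <= t <= len (G1 a b c) e ->
  rsum n (fun i => k i * Phi i e t) = 0.
Proof.
  intros Hz H0.
  assert (Hrows : forall x q s, (q < 7)%nat -> 0 <= s <= side_len a c b x ->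
            rsum n (fun i => k i * transplanted_arms a b c 1 (Phi i) x q s) = 0).
  { intros x q s Hq Hs.
    destruct (arm_point a c b x q s Hq Hs) as (e & t & Het & He & Ht).
    rewrite <- (H0 e t He Ht). apply rsum_ext. intros i Hi.
    unfold transplant. rewrite <- Het, arm_G1_assemble; auto.
    apply transplanted_arms_midpoints, Hz, Hi. }
  assert (Harms : forall x v s, (v < 7)%nat -> 0 <= s <= side_len a b c x ->
            rsum n (fun i => k i * arm a b c 1 (Phi i) x v s) = 0).
  { intros x v s Hv Hs.
    apply (transplant_row_injective (fun v => rsum n (fun i => k i * arm a b c 1 (Phi i) x v s)));
      [|exact Hv].
    intros q Hq. rewrite <- transplant_row_lincomb.
    rewrite <- side_len_swap_bc in Hs.
    pose proof (Hrows (swap_bc x) q s Hq Hs) as E.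
    unfold transplanted_arms in E. rewrite swap_bc_involutive in E. exact E. }
  intros e t He Ht.
  destruct (G1_assemble_point a b c e t He Ht) as (x & v & s & Hpt & Hv & Hs).
  rewrite <- (Harms x v s Hv Hs). apply rsum_ext. intros i _.
  rewrite <- (G1_assemble_arm a b c (Phi i) e t He), Hpt. reflexivity.
Qed.

Lemma mult_ge_G1_G2 a b c lam n : 0 < a -> 0 < b -> 0 < c ->
  mult_ge (G1 a b c) lam n -> mult_ge (G2 a b c) lam n.
Proof.
  intros Ha Hb Hc [Phi [dPhi [ddPhi [Heig Hind]]]].
  exists (fun i => transplant a b c 1 (Phi i)), (fun i => transplant a b c (-1) (dPhi i)),
    (fun i => transplant a b c 1 (ddPhi i)).
  split.
  - intros i Hi. apply transplant_eig_solution; auto.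
  - intros k Hk. apply Hind. apply (transplant_lincomb_zero a b c); [|exact Hk].
    intros i Hi. destruct (Heig i Hi) as (_ & _ & Hv).
    apply G1_conditions_of_DSBC in Hv. apply Hv.
Qed.

Lemma G1_G2_isospectral a b c : 0 < a -> 0 < b -> 0 < c -> isospectral (G1 a b c) (G2 a b c).
Proof.
  intros Ha Hb Hc lam n. split.
  - apply mult_ge_G1_G2; auto.
  - rewrite G2_swap. apply mult_ge_G1_G2; auto.
Qed.

(** * Non-isometry *)

Lemma G2_pendant_incidence a b c e w : (e < 15)%nat -> (7 <= w)%nat ->
  incident (G2 a b c) e w -> e = (w - 1)%nat.
Proof.
  unfold incident, src, tgt; intros He Hw H.
  do 15 (destruct e as [|e]; [cbn in H; lia|]). lia.
Qed.

Lemma G2_inner_edge a b c e : (e < 15)%nat ->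
  (src (G2 a b c) e <= 6)%nat -> (tgt (G2 a b c) e <= 6)%nat -> (e <= 5)%nat.
Proof.
  unfold src, tgt; intros He H1 H2.
  do 15 (destruct e as [|e]; [cbn in H1, H2; lia|]). lia.
Qed.

Lemma G2_inner_incidence a b c e w : (e <= 5)%nat -> w <> 0%nat ->
  incident (G2 a b c) e w -> e = (w - 1)%nat \/ e = (w + 2)%nat.
Proof.
  unfold incident, src, tgt; intros He Hw H.
  do 6 (destruct e as [|e]; [cbn in H; lia|]). lia.
Qed.

Section Isometry.
Variables (a b c : R) (fV fE : nat -> nat).
Hypotheses (Ha : 0 < a) (Hab : a <> b) (Hbc : b <> c) (Hac : a <> c).
Hypothesis fE_bound : forall e, (e < 15)%nat -> (fE e < 15)%nat.
Hypothesis fE_inj : forall e f, (e < 15)%nat -> (f < 15)%nat -> fE e = fE f -> e = f.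
Hypothesis fE_edge : forall e, (e < 15)%nat ->
  len (G2 a b c) (fE e) = len (G1 a b c) e /\
  ((src (G2 a b c) (fE e) = fV (src (G1 a b c) e) /\ tgt (G2 a b c) (fE e) = fV (tgt (G1 a b c) e)) \/
   (src (G2 a b c) (fE e) = fV (tgt (G1 a b c) e) /\ tgt (G2 a b c) (fE e) = fV (src (G1 a b c) e))).

Lemma iso_incident e v : (e < 15)%nat ->
  incident (G1 a b c) e v -> incident (G2 a b c) (fE e) (fV v).
Proof.
  unfold incident; intros He Hv.
  destruct (fE_edge e He) as [_ [[H1 H2]|[H1 H2]]]; destruct Hv as [<-|<-]; tauto.
Qed.

Lemma fE_neq e f : (e < 15)%nat -> (f < 15)%nat -> e <> f -> fE e <> fE f.
Proof. intros He Hf Hef E. apply Hef, fE_inj; auto. Qed.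

Lemma iso_branch_vertex v e1 e2 :
  (e1 < 15)%nat -> (e2 < 15)%nat -> e1 <> e2 ->
  incident (G1 a b c) e1 v -> incident (G1 a b c) e2 v -> (fV v <= 6)%nat.
Proof.
  intros H1 H2 H12 I1 I2.
  destruct (le_lt_dec (fV v) 6) as [|Hlt]; [assumption|]. exfalso.
  apply (fE_neq e1 e2); auto.
  rewrite (G2_pendant_incidence a b c (fE e1) (fV v)), (G2_pendant_incidence a b c (fE e2) (fV v));
    auto using iso_incident.
Qed.

Lemma iso_inner_edge e : (e < 15)%nat ->
  (fV (src (G1 a b c) e) <= 6)%nat -> (fV (tgt (G1 a b c) e) <= 6)%nat -> (fE e <= 5)%nat.
Proof.
  intros He Hs Ht.
  destruct (fE_edge e He) as [_ [[E1 E2]|[E1 E2]]];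
    apply (G2_inner_edge a b c); auto; rewrite ?E1, ?E2; assumption.
Qed.

Lemma iso_center : fV 0%nat = 0%nat.
Proof.
  assert (V0 : (fV 0 <= 6)%nat) by (apply (iso_branch_vertex _ 0 1); unfold incident; cbn; lia).
  assert (V1 : (fV 1 <= 6)%nat) by (apply (iso_branch_vertex _ 0 3); unfold incident; cbn; lia).
  assert (V2 : (fV 2 <= 6)%nat) by (apply (iso_branch_vertex _ 1 4); unfold incident; cbn; lia).
  assert (V3 : (fV 3 <= 6)%nat) by (apply (iso_branch_vertex _ 2 5); unfold incident; cbn; lia).
  destruct (Nat.eq_dec (fV 0) 0) as [|Hn]; [assumption|]. exfalso.
  assert (Hcenter : forall e, (e < 3)%nat -> fE e = (fV 0 - 1)%nat \/ fE e = (fV 0 + 2)%nat).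
  { intros e He. apply (G2_inner_incidence a b c); [| exact Hn |].
    - apply iso_inner_edge; [lia | |]; destruct e as [|[|[|e]]]; cbn; lia.
    - apply iso_incident; [lia|]. unfold incident; destruct e as [|[|[|e]]]; cbn; lia. }
  pose proof (Hcenter 0%nat ltac:(lia)). pose proof (Hcenter 1%nat ltac:(lia)).
  pose proof (Hcenter 2%nat ltac:(lia)).
  pose proof (fE_neq 0 1 ltac:(lia) ltac:(lia) ltac:(lia)).
  pose proof (fE_neq 0 2 ltac:(lia) ltac:(lia) ltac:(lia)).
  pose proof (fE_neq 1 2 ltac:(lia) ltac:(lia) ltac:(lia)).
  lia.
Qed.

Ltac distinct_lengths :=
  first [ lia | lra | exfalso; apply Hab; lra | exfalso; apply Hbc; lra | exfalso; apply Hac; lra ].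

Lemma isometry_absurd : False.
Proof.
  pose proof iso_center as F0.
  destruct (fE_edge 0 ltac:(lia)) as [Len0 End0].
  pose proof (fE_bound 0 ltac:(lia)) as B0.
  unfold len, src, tgt in Len0, End0; cbn in Len0, End0. rewrite F0 in End0.
  assert (E0 : fE 0%nat = 2%nat /\ fV 1%nat = 3%nat).
  { remember (fE 0%nat) as k.
    do 15 (destruct k as [|k]; [cbn in Len0, End0; distinct_lengths|]). lia. }
  destruct E0 as [E0 F1].
  destruct (fE_edge 6 ltac:(lia)) as [Len6 End6].
  pose proof (fE_bound 6 ltac:(lia)) as B6.
  pose proof (fE_neq 0 6 ltac:(lia) ltac:(lia) ltac:(lia)) as N6.
  unfold len, src, tgt in Len6, End6; cbn in Len6, End6. rewrite F1 in End6.
  rewrite E0 in N6.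
  remember (fE 6%nat) as k.
  do 15 (destruct k as [|k]; [cbn in Len6, End6; distinct_lengths|]). lia.
Qed.

End Isometry.

Lemma G1_G2_not_isometric a b c : 0 < a -> a <> b -> b <> c -> a <> c ->
  ~ isometric (G1 a b c) (G2 a b c).
Proof.
  intros Ha Hab Hbc Hac (_ & _ & fV & fE & _ & _ & HfE & HfEi & Hmap).
  exact (isometry_absurd a b c fV fE Ha Hab Hbc Hac HfE HfEi Hmap).
Qed.

(** * Torsional rigidity *)

Definition slope (G : mgraph) (U : nat -> R) (e : nat) : R :=
  (U (tgt G e) - U (src G e)) / len G e + len G e / 2.

Definition torsion_profile (G : mgraph) (U : nat -> R) (e : nat) (x : R) : R :=
  U (src G e) + slope G U e * x - x * x / 2.

Definition torsion_flux (G : mgraph) (U : nat -> R) (e : nat) (x : R) : R := slope G U e - x.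

Definition torsion_integral (G : mgraph) (U : nat -> R) : R :=
  rsum (nE G) (fun e => (U (src G e) + U (tgt G e)) * len G e / 2 + len G e ^ 3 / 12).

Section Torsion.
Variable G : mgraph.
Hypothesis len_pos : forall e, (e < nE G)%nat -> 0 < len G e.

Lemma torsional_rigidity_of_profile U :
  DSBC_vertex G (torsion_profile G U) (torsion_flux G U) ->
  torsional_rigidity_is G (torsion_integral G U).
Proof.
  intros Hv.
  exists (torsion_profile G U), (torsion_flux G U), (fun _ _ => -1),
    (fun e => (U (src G e) + U (tgt G e)) * len G e / 2 + len G e ^ 3 / 12).
  split; [split; [split|split]|split].
  - intros e x. apply is_derive_Reals. unfold torsion_profile, torsion_flux.
    auto_derive; auto; field.
  - intros e x. apply is_derive_Reals. unfold torsion_flux. auto_derive; auto; ring.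
  - reflexivity.
  - exact Hv.
  - intros e He. specialize (len_pos e He).
    exists (quadratic_Riemann_integrable (len G e) (slope G U e) (U (src G e))).
    rewrite (RiemannInt_quadratic _ (slope G U e) (U (src G e))); [|lra|reflexivity].
    unfold slope. field. lra.
  - reflexivity.
Qed.

Lemma torsion_solution_is_profile u du ddu U :
  torsion_solution G u du ddu ->
  (forall e, (e < nE G)%nat -> u e 0 = U (src G e) /\ u e (len G e) = U (tgt G e)) ->
  forall e x, (e < nE G)%nat -> 0 <= x <= len G e ->
  u e x = torsion_profile G U e x /\ du e x = torsion_flux G U e x.
Proof.
  intros [[D1 D2] [Hdd _]] HU e x He Hx.
  specialize (len_pos e He). destruct (HU e He) as [H0 Hl].
  pose proof (torsion_on_interval (u e) (du e) (ddu e) (len G e) (D1 e) (D2 e)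
                (fun y Hy => Hdd e y He Hy)) as Q.
  destruct (Q (len G e) ltac:(lra)) as [_ Ql].
  destruct (Q x Hx) as [Qd Qu].
  assert (Hslope : du e 0 = slope G U e).
  { unfold slope. rewrite <- H0, <- Hl, Ql. field. lra. }
  unfold torsion_profile, torsion_flux. rewrite Qu, Qd, H0, Hslope. split; reflexivity.
Qed.

Lemma DSBC_vertex_endpoints p dp q dq :
  (forall e, (e < nE G)%nat ->
     p e 0 = q e 0 /\ p e (len G e) = q e (len G e) /\
     dp e 0 = dq e 0 /\ dp e (len G e) = dq e (len G e)) ->
  DSBC_vertex G p dp -> DSBC_vertex G q dq.
Proof.
  intros H.
  assert (Hval : forall e v, (e < nE G)%nat -> endval G p e v = endval G q e v).
  { intros e v He. destruct (H e He) as (E0 & El & _). unfold endval.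
    destruct (Nat.eqb _ _); assumption. }
  assert (Hder : forall v, rsum (nE G) (fun e => inward_der G dp e v) =
                           rsum (nE G) (fun e => inward_der G dq e v)).
  { intros v. apply rsum_ext. intros e He. destruct (H e He) as (_ & _ & D0 & Dl).
    unfold inward_der. rewrite D0, Dl. reflexivity. }
  intros (Hc & Hd & Hk). split; [|split].
  - intros v Hv Hdeg e1 e2 He1 He2 I1 I2. rewrite <- !Hval by assumption. auto.
  - intros v Hv Hdeg e He I. rewrite <- Hval by assumption. eauto.
  - intros v Hv Hdeg. rewrite <- Hder. auto.
Qed.

Lemma torsional_rigidity_is_integral (value : (nat -> R -> R) -> nat -> R) T :
  (forall u du, DSBC_vertex G u du -> forall e, (e < nE G)%nat ->
     u e 0 = value u (src G e) /\ u e (len G e) = value u (tgt G e)) ->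
  torsional_rigidity_is G T ->
  exists u, DSBC_vertex G (torsion_profile G (value u)) (torsion_flux G (value u)) /\
    T = torsion_integral G (value u).
Proof.
  intros Hvalue (u & du & ddu & I & Hsol & HI & ->).
  assert (HU := Hvalue u du (proj2 (proj2 Hsol))).
  assert (Hprof := torsion_solution_is_profile u du ddu (value u) Hsol HU).
  exists u. split.
  - apply (DSBC_vertex_endpoints u du); [|apply Hsol].
    intros e He. specialize (len_pos e He).
    destruct (Hprof e 0 He ltac:(lra)) as [-> ->].
    destruct (Hprof e (len G e) He ltac:(lra)) as [-> ->]. auto.
  - apply rsum_ext. intros e He. specialize (len_pos e He).
    destruct (HI e He) as [pr <-].
    rewrite (RiemannInt_quadratic _ (slope G (value u) e) (value u (src G e))); [|lra|].
    + unfold slope. field. lra.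
    + intros x Hx. apply Hprof; auto.
Qed.

End Torsion.

(* The explicit solution of the Kirchhoff system for the vertex values of the torsion function
   of G1, over the common denominator [torsion_den]; rotating (a, b, c) together with the
   three branches of G1 accounts for the permuted arguments in [G1_torsion_values]. *)
Definition torsion_den (a b c : R) : R := 64 * b^3 * c^5 + 144 * b^4 * c^4 + 64 * b^5 * c^3 + 192 * a * b^2 * c^5 + 704 * a * b^3 * c^4 + 704 * a * b^4 * c^3 + 192 * a * b^5 * c^2 + 192 * a^2 * b * c^5 + 1120 * a^2 * b^2 * c^4 + 1870 * a^2 * b^3 * c^3 + 1120 * a^2 * b^4 * c^2 + 192 * a^2 * b^5 * c + 64 * a^3 * c^5 + 704 * a^3 * b * c^4 + 1870 * a^3 * b^2 * c^3 + 1870 * a^3 * b^3 * c^2 + 704 * a^3 * b^4 * c + 64 * a^3 * b^5 + 144 * a^4 * c^4 + 704 * a^4 * b * c^3 + 1120 * a^4 * b^2 * c^2 + 704 * a^4 * b^3 * c + 144 * a^4 * b^4 + 64 * a^5 * c^3 + 192 * a^5 * b * c^2 + 192 * a^5 * b^2 * c + 64 * a^5 * b^3.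
Definition torsion_num_center (a b c : R) : R := 112 * b^4 * c^6 + 224 * b^5 * c^5 + 96 * b^6 * c^4 + 432 * a * b^3 * c^6 + 1472 * a * b^4 * c^5 + 1436 * a * b^5 * c^4 + 400 * a * b^6 * c^3 + 624 * a^2 * b^2 * c^6 + 3254 * a^2 * b^3 * c^5 + 5208 * a^2 * b^4 * c^4 + 3218 * a^2 * b^5 * c^3 + 624 * a^2 * b^6 * c^2 + 400 * a^3 * b * c^6 + 3218 * a^3 * b^2 * c^5 + 7711 * a^3 * b^3 * c^4 + 7711 * a^3 * b^4 * c^3 + 3254 * a^3 * b^5 * c^2 + 432 * a^3 * b^6 * c + 96 * a^4 * c^6 + 1436 * a^4 * b * c^5 + 5208 * a^4 * b^2 * c^4 + 7711 * a^4 * b^3 * c^3 + 5208 * a^4 * b^4 * c^2 + 1472 * a^4 * b^5 * c + 112 * a^4 * b^6 + 224 * a^5 * c^5 + 1472 * a^5 * b * c^4 + 3254 * a^5 * b^2 * c^3 + 3218 * a^5 * b^3 * c^2 + 1436 * a^5 * b^4 * c + 224 * a^5 * b^5 + 112 * a^6 * c^4 + 432 * a^6 * b * c^3 + 624 * a^6 * b^2 * c^2 + 400 * a^6 * b^3 * c + 96 * a^6 * b^4.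
Definition torsion_num_middle (a b c : R) : R := 64 * a * b^3 * c^6 + 264 * a * b^4 * c^5 + 320 * a * b^5 * c^4 + 112 * a * b^6 * c^3 + 176 * a^2 * b^2 * c^6 + 1048 * a^2 * b^3 * c^5 + 2012 * a^2 * b^4 * c^4 + 1462 * a^2 * b^5 * c^3 + 336 * a^2 * b^6 * c^2 + 160 * a^3 * b * c^6 + 1412 * a^3 * b^2 * c^5 + 3971 * a^3 * b^3 * c^4 + 4549 * a^3 * b^4 * c^3 + 2182 * a^3 * b^5 * c^2 + 336 * a^3 * b^6 * c + 48 * a^4 * c^6 + 756 * a^4 * b * c^5 + 3188 * a^4 * b^2 * c^4 + 5325 * a^4 * b^3 * c^3 + 3992 * a^4 * b^4 * c^2 + 1264 * a^4 * b^5 * c + 112 * a^4 * b^6 + 128 * a^5 * c^5 + 992 * a^5 * b * c^4 + 2450 * a^5 * b^2 * c^3 + 2654 * a^5 * b^3 * c^2 + 1292 * a^5 * b^4 * c + 224 * a^5 * b^5 + 80 * a^6 * c^4 + 336 * a^6 * b * c^3 + 528 * a^6 * b^2 * c^2 + 368 * a^6 * b^3 * c + 96 * a^6 * b^4.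
Definition torsion_num_outer (a b c : R) : R := 32 * a * b^3 * c^6 + 136 * a * b^4 * c^5 + 176 * a * b^5 * c^4 + 64 * a * b^6 * c^3 + 112 * a^2 * b^2 * c^6 + 608 * a^2 * b^3 * c^5 + 1064 * a^2 * b^4 * c^4 + 680 * a^2 * b^5 * c^3 + 128 * a^2 * b^6 * c^2 + 128 * a^3 * b * c^6 + 956 * a^3 * b^2 * c^5 + 2273 * a^3 * b^3 * c^4 + 2109 * a^3 * b^4 * c^3 + 736 * a^3 * b^5 * c^2 + 64 * a^3 * b^6 * c + 48 * a^4 * c^6 + 612 * a^4 * b * c^5 + 2092 * a^4 * b^2 * c^4 + 2687 * a^4 * b^3 * c^3 + 1396 * a^4 * b^4 * c^2 + 232 * a^4 * b^5 * c + 128 * a^5 * c^5 + 784 * a^5 * b * c^4 + 1426 * a^5 * b^2 * c^3 + 1018 * a^5 * b^3 * c^2 + 248 * a^5 * b^4 * c + 80 * a^6 * c^4 + 240 * a^6 * b * c^3 + 240 * a^6 * b^2 * c^2 + 80 * a^6 * b^3 * c.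
Definition torsion_gap (a b c : R) : R := 88 * b^3 * c^5 + 184 * b^4 * c^4 + 88 * b^5 * c^3 + 264 * a * b^2 * c^5 + 1016 * a * b^3 * c^4 + 1016 * a * b^4 * c^3 + 264 * a * b^5 * c^2 + 264 * a^2 * b * c^5 + 1664 * a^2 * b^2 * c^4 + 2904 * a^2 * b^3 * c^3 + 1664 * a^2 * b^4 * c^2 + 264 * a^2 * b^5 * c + 88 * a^3 * c^5 + 1016 * a^3 * b * c^4 + 2904 * a^3 * b^2 * c^3 + 2904 * a^3 * b^3 * c^2 + 1016 * a^3 * b^4 * c + 88 * a^3 * b^5 + 184 * a^4 * c^4 + 1016 * a^4 * b * c^3 + 1664 * a^4 * b^2 * c^2 + 1016 * a^4 * b^3 * c + 184 * a^4 * b^4 + 88 * a^5 * c^3 + 264 * a^5 * b * c^2 + 264 * a^5 * b^2 * c + 88 * a^5 * b^3.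

Definition G1_torsion_values (a b c : R) (v : nat) : R :=
  match v with
  | 0 => torsion_num_center a b c
  | 1 => torsion_num_middle a b c | 2 => torsion_num_middle b c a | 3 => torsion_num_middle c a b
  | 4 => torsion_num_outer a b c | 5 => torsion_num_outer b c a | 6 => torsion_num_outer c a b
  | _ => 0
  end / torsion_den a b c.

Ltac positivity := repeat first [ apply Rplus_lt_0_compat | apply Rmult_lt_0_compat | apply pow_lt | lra ].

Lemma torsion_den_pos a b c : 0 < a -> 0 < b -> 0 < c -> 0 < torsion_den a b c.
Proof. intros; unfold torsion_den; positivity. Qed.

Lemma torsion_den_swap a b c : torsion_den a c b = torsion_den a b c.
Proof. unfold torsion_den; ring. Qed.

Lemma G1_torsion_values_DSBC a b c : 0 < a -> 0 < b -> 0 < c ->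
  let U := G1_extend (G1_torsion_values a b c) in
  DSBC_vertex (G1 a b c) (torsion_profile (G1 a b c) U) (torsion_flux (G1 a b c) U).
Proof.
  intros Ha Hb Hc U. pose proof (torsion_den_pos a b c Ha Hb Hc).
  apply G1_DSBC_of_conditions.
  unfold G1_conditions, G1_pendant_zero, U, torsion_profile, torsion_flux, slope; cbn.
  repeat split; try (field; lra).
  all: unfold G1_torsion_values, torsion_num_center, torsion_num_middle, torsion_num_outer,
    torsion_den in *; field; lra.
Qed.

(* Pairing the difference of the Kirchhoff defects with the difference of the vertex values
   gives the Dirichlet energy of the latter. *)
Lemma G1_torsion_values_unique a b c U V : 0 < a -> 0 < b -> 0 < c ->
  DSBC_vertex (G1 a b c) (torsion_profile (G1 a b c) (G1_extend U))
    (torsion_flux (G1 a b c) (G1_extend U)) ->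
  DSBC_vertex (G1 a b c) (torsion_profile (G1 a b c) (G1_extend V))
    (torsion_flux (G1 a b c) (G1_extend V)) ->
  forall v, (v < 7)%nat -> U v = V v.
Proof.
  intros Ha Hb Hc (_ & _ & KU) (_ & _ & KV).
  set (K := fun U v => rsum (nE (G1 a b c)) (fun e => inward_der (G1 a b c) (torsion_flux (G1 a b c) (G1_extend U)) e v)).
  set (W := fun v => U v - V v).
  set (jump := fun e => G1_extend W (tgt (G1 a b c) e) - G1_extend W (src (G1 a b c) e)).
  assert (Henergy : rsum 7 (fun v => W v * (K U v - K V v)) =
                    rsum (nE (G1 a b c)) (fun e => jump e ^ 2 / len (G1 a b c) e)).
  { unfold K, jump, W, torsion_flux, slope, inward_der; cbn. field. lra. }
  assert (Hdefect : forall v, (v < 7)%nat -> K U v = 0 /\ K V v = 0).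
  { intros v Hv. assert (Hdeg : deg (G1 a b c) v <> 1%nat).
    { do 7 (destruct v as [|v]; [cbn; lia|]). lia. }
    split; [apply KU | apply KV]; auto; cbn; lia. }
  assert (Hjump : forall e, (e < 15)%nat -> jump e = 0).
  { intros e He. pose proof (G1_len_pos a b c e Ha Hb Hc He).
    assert (Hsq : jump e ^ 2 / len (G1 a b c) e = 0).
    { apply (rsum_nonneg_eq0 (nE (G1 a b c)) (fun e => jump e ^ 2 / len (G1 a b c) e)); [| |exact He].
      - intros i Hi. pose proof (G1_len_pos a b c i Ha Hb Hc Hi).
        apply Rle_mult_inv_pos; [nra | assumption].
      - rewrite <- Henergy, (rsum_ext 7 _ (fun _ => 0)); [cbn; ring|].
        intros v Hv. destruct (Hdefect v Hv) as [-> ->]. ring. }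
    assert (Hsq' : jump e ^ 2 = 0).
    { replace (jump e ^ 2) with (jump e ^ 2 / len (G1 a b c) e * len (G1 a b c) e) by (field; lra).
      rewrite Hsq. ring. }
    nra. }
  pose proof (Hjump 0%nat ltac:(lia)). pose proof (Hjump 6%nat ltac:(lia)).
  pose proof (Hjump 7%nat ltac:(lia)). pose proof (Hjump 8%nat ltac:(lia)).
  pose proof (Hjump 9%nat ltac:(lia)). pose proof (Hjump 11%nat ltac:(lia)).
  pose proof (Hjump 13%nat ltac:(lia)).
  unfold jump, G1_extend, W in *; cbn in *.
  intros v Hv. do 7 (destruct v as [|v]; [lra|]). lia.
Qed.

Lemma G1_extend_ext U V : (forall v, (v < 7)%nat -> U v = V v) ->
  forall v, G1_extend U v = G1_extend V v.
Proof. intros H v. unfold G1_extend. destruct (Nat.ltb_spec v 7); auto. Qed.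

Lemma G1_torsional_rigidity a b c T : 0 < a -> 0 < b -> 0 < c ->
  torsional_rigidity_is (G1 a b c) T ->
  T = torsion_integral (G1 a b c) (G1_extend (G1_torsion_values a b c)).
Proof.
  intros Ha Hb Hc HT.
  destruct (torsional_rigidity_is_integral (G1 a b c) (fun e He => G1_len_pos a b c e Ha Hb Hc He)
              (fun u => G1_extend (G1_vertex_value u)) T) as (u & Hu & ->); [|exact HT|].
  - intros u du Hv e He. apply (G1_endpoint_values a b c u du); [|exact He].
    apply G1_conditions_of_DSBC, Hv.
  - unfold torsion_integral. apply rsum_ext. intros e _.
    rewrite !(G1_extend_ext (G1_vertex_value u) (G1_torsion_values a b c)); [reflexivity | ..];
      apply (G1_torsion_values_unique a b c); auto; apply G1_torsion_values_DSBC; auto.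
Qed.

Lemma G1_torsion_gap a b c : 0 < a -> 0 < b -> 0 < c ->
  torsion_integral (G1 a b c) (G1_extend (G1_torsion_values a b c)) -
  torsion_integral (G1 a c b) (G1_extend (G1_torsion_values a c b)) =
  - ((a - b) * (b - c) * (a - c) * torsion_gap a b c) / torsion_den a b c.
Proof.
  intros Ha Hb Hc. pose proof (torsion_den_pos a b c Ha Hb Hc).
  unfold torsion_integral, G1_extend, G1_torsion_values; cbn.
  rewrite torsion_den_swap.
  unfold torsion_num_center, torsion_num_middle, torsion_num_outer, torsion_gap, torsion_den in *.
  field. lra.
Qed.

Lemma G1_swap_torsion_neq a b c : 0 < a -> 0 < b -> 0 < c -> a <> b -> b <> c -> a <> c ->
  torsion_integral (G1 a b c) (G1_extend (G1_torsion_values a b c)) <>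
  torsion_integral (G1 a c b) (G1_extend (G1_torsion_values a c b)).
Proof.
  intros Ha Hb Hc Hab Hbc Hac Heq.
  pose proof (G1_torsion_gap a b c Ha Hb Hc) as Hgap.
  pose proof (torsion_den_pos a b c Ha Hb Hc).
  assert (0 < torsion_gap a b c) by (unfold torsion_gap; positivity).
  rewrite Heq, Rminus_diag in Hgap.
  assert (Hprod : (a - b) * (b - c) * (a - c) * torsion_gap a b c = 0).
  { replace ((a - b) * (b - c) * (a - c) * torsion_gap a b c)
      with (- (- ((a - b) * (b - c) * (a - c) * torsion_gap a b c) / torsion_den a b c)
            * torsion_den a b c) by (field; lra).
    rewrite <- Hgap. ring. }
  repeat (apply Rmult_integral in Hprod as [Hprod|Hprod]); lra.
Qed.

Theorem theorem1 (a b c : R) :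
  0 < a -> 0 < b -> 0 < c -> a <> b -> b <> c -> a <> c ->
  isospectral (G1 a b c) (G2 a b c) /\
  ~ isometric (G1 a b c) (G2 a b c) /\
  ((exists T1 T2, torsional_rigidity_is (G1 a b c) T1 /\
                  torsional_rigidity_is (G2 a b c) T2) /\
   forall T1 T2, torsional_rigidity_is (G1 a b c) T1 ->
                 torsional_rigidity_is (G2 a b c) T2 -> T1 <> T2).
Proof.
  intros Ha Hb Hc Hab Hbc Hac.
  split; [apply G1_G2_isospectral; auto|].
  split; [apply G1_G2_not_isometric; auto|].
  rewrite G2_swap. split.
  - eexists _, _. split; apply torsional_rigidity_of_profile;
      auto using G1_len_pos, G1_torsion_values_DSBC.
  - intros T1 T2 H1 H2.
    rewrite (G1_torsional_rigidity a b c T1), (G1_torsional_rigidity a c b T2) by auto.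
    apply G1_swap_torsion_neq; auto.
Qed.
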